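(* Let $\mathcal V$ be a multivector field on $X$, where $X$ is invariant, and let $R\subset X$. The following are equivalent: (1) $R$ is a repeller; (2) $R$ is open, $\mathcal V$-compatible and invariant; (3) $R$ is an open isolated invariant set.
   Context: $X$ is a finite $T_0$ topological space. For $A\subset X$, $\operatorname{cl}A$ is its closure and $\operatorname{mo}A:=\operatorname{cl}A\setminus A$. $A$ is locally closed if it is the intersection of an open and a closed subset of $X$. $H$ denotes relative singular homology. A multivector is a nonempty locally closed subset of $X$; a multivector field $\mathcal V$ on $X$ is a partition of $X$ into multivectors. For $x\in X$, $[x]$ denotes the element of $\mathcal V$ containing $x$. A multivector $V$ is critical if $H(\operatorname{cl}V,\operatorname{mo}V)\neq0$, regular otherwise. $A\subset X$ is $\mathcal V$-compatible if for every $x\in X$ either $[x]\cap A=\emptyset$ or $[x]\subset A$. Put $\Pi_{\mathcal V}(x):=[x]\cup\operatorname{cl}\{x\}$, $\Pi_{\mathcal V}(A):=\bigcup_{x\in A}\Pi_{\mathcal V}(x)$ and $\Pi_{\mathcal V}^{-1}(A):=\{x\in X:\Pi_{\mathcal V}(x)\cap A\neq\emptyset\}$. A $\mathbb Z$-interval is $\mathbb Z\cap I$ for a real interval $I$. A solution in $A\subset X$ is a map $\varphi:D\to A$ on a $\mathbb Z$-interval $D$ with $\varphi(i+1)\in\Pi_{\mathcal V}(\varphi(i))$ whenever $i,i+1\in D$; it is full if $D=\mathbb Z$, and a path if $D$ is bounded, its endpoints being $\varphi(\min D)$ and $\varphi(\max D)$. A full solution $\varphi$ is essential if for every $t\in\mathbb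 Z$ with $[\varphi(t)]$ regular, the set $\{s\in\mathbb Z:\varphi(s)\notin[\varphi(t)]\}$ is unbounded below and unbounded above. $\operatorname{Inv}A$ is the set of $x\in A$ such that there is an essential full solution $\varphi$ with image in $A$ and $\varphi(0)=x$; $A$ is invariant if $\operatorname{Inv}A=A$. A closed set $N$ isolates an invariant set $S\subset N$ if (a) every path in $N$ with both endpoints in $S$ has image contained in $S$, and (b) $\Pi_{\mathcal V}(S)\subset N$. An invariant set is an isolated invariant set if some closed set isolates it. An invariant set $R$ is a repeller if $\Pi_{\mathcal V}^{-1}(R)=R$. *)

From HB Require Import structures.
From mathcomp Require Import all_boot all_order all_algebra.
Set Implicit Arguments. Unset Strict Implicit. Unset Printing Implicit Defensive.
Import Order.TTheory GRing.Theory Num.Theory.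

Section Defs.
Variable T : finType.
Variable opens : {set {set T}}.

Definition is_T0_topology : Prop :=
  [/\ set0 \in opens, [set: T] \in opens,
      (forall U W, U \in opens -> W \in opens -> U :|: W \in opens),
      (forall U W, U \in opens -> W \in opens -> U :&: W \in opens) &
      (forall x y : T, x != y ->
         exists2 U, U \in opens & (x \in U) != (y \in U))].

Definition is_open (A : {set T}) : bool := A \in opens.
Definition is_closed (A : {set T}) : bool := ~: A \in opens.

Definition cl (A : {set T}) : {set T} :=
  \bigcap_(C : {set T} | is_closed C && (A \subset C)) C.

Definition mo (A : {set T}) : {set T} := cl A :\: A.

Definition locally_closed (A : {set T}) : Prop :=
  exists U C, [/\ is_open U, is_closed C & A = U :&: C].

(* ---- relative homology of a pair of subspaces (Y, A), A ⊆ Y ----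
   Computed (McCord) as the simplicial homology with integer coefficients
   of the pair of order complexes of the specialization order
   x < y  <=>  x <> y /\ x \in cl {y}. *)
Definition spec_lt (x y : T) : bool := (x != y) && (x \in cl [set y]).

Definition simplexb (Y : {set T}) (s : seq T) : bool :=
  all (fun x => x \in Y) s && sorted spec_lt s.

Definition chain (n : nat) := {ffun n.+1.-tuple T -> int}.

Definition supported (Y : {set T}) n (c : chain n) : Prop :=
  forall t, c t != 0%R -> simplexb Y t.

Definition bd n (c : chain n.+1) : chain n :=
  [ffun s : n.+1.-tuple T =>
     (\sum_(t : n.+2.-tuple T) \sum_(i < n.+2)
        if tval s == take i t ++ drop i.+1 t
        then (-1) ^+ i * c t else 0)%R].

Definition rel_cycle (A : {set T}) n : chain n -> Prop :=
  match n with
  | 0 => fun _ => True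
  | m.+1 => fun z => supported A (bd z)
  end.

Definition rel_boundary (Y A : {set T}) n (z : chain n) : Prop :=
  exists (w : chain n.+1) (c : chain n),
    [/\ supported Y w, supported A c & forall s, z s = (bd w s + c s)%R].

Definition homology_nonzero (Y A : {set T}) : Prop :=
  exists n (z : chain n),
    [/\ supported Y z, rel_cycle A z & ~ rel_boundary Y A z].

Definition multivector_field (V : {set {set T}}) : Prop :=
  partition V [set: T] /\ (forall A, A \in V -> locally_closed A).

Variable V : {set {set T}}.

Definition critical (A : {set T}) : Prop := homology_nonzero (cl A) (mo A).

Definition compatible (A : {set T}) : Prop :=
  forall x, [disjoint pblock V x & A] \/ pblock V x \subset A.

Definition Pi (x : T) : {set T} := pblock V x :|: cl [set x].
Definition PiS (A : {set T}) : {set T} := \bigcup_(x in A) Pi x.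
Definition PiInv (A : {set T}) : {set T} := [set x | Pi x :&: A != set0].

Definition full_solution_in (A : {set T}) (phi : int -> T) : Prop :=
  (forall i, phi i \in A) /\ (forall i, phi (i + 1)%R \in Pi (phi i)).

Definition essential (phi : int -> T) : Prop :=
  forall t, ~ critical (pblock V (phi t)) ->
    forall m : int,
      (exists s : int, (s <= m)%R /\ phi s \notin pblock V (phi t)) /\
      (exists s : int, (m <= s)%R /\ phi s \notin pblock V (phi t)).

Definition in_Inv (A : {set T}) (x : T) : Prop :=
  exists phi, [/\ full_solution_in A phi, essential phi & phi 0%R = x].

Definition is_invariant (A : {set T}) : Prop :=
  forall x, x \in A <-> in_Inv A x.

(* A path with domain a bounded Z-interval is encoded (after reindexing)
   as a nonempty sequence x0 :: p; endpoints x0 and last x0 p. *)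
Definition path_in (N : {set T}) (x0 : T) (p : seq T) : bool :=
  path (fun x y => y \in Pi x) x0 p && all (fun x => x \in N) (x0 :: p).

Definition isolates (N S : {set T}) : Prop :=
  [/\ is_closed N, S \subset N,
      (forall x0 p, path_in N x0 p -> x0 \in S -> last x0 p \in S ->
         all (fun x => x \in S) (x0 :: p)) &
      PiS S \subset N].

Definition isolated_invariant (S : {set T}) : Prop :=
  is_invariant S /\ exists N, isolates N S.

Definition repeller (R : {set T}) : Prop :=
  is_invariant R /\ PiInv R = R.

End Defs.

From Pilot Require Import Defs.
From HB Require Import structures.
From mathcomp Require Import all_boot all_order all_algebra.
Set Implicit Arguments. Unset Strict Implicit. Unset Printing Implicit Defensive.

(* In a finite space the open sets are exactly the up-sets of the
   specialization order (y in cl {x} makes x "above" y), so R is open and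
   V-compatible iff it is closed under the backward map x |-> Pi x, i.e. iff
   PiInv R = R.  Such a set is isolated by X itself, since a path that ends in
   R can be followed backwards inside R.  Conversely, if N isolates R then for
   x in the block of some y in R the path y, x, y runs in N with both
   endpoints in R, so x is in R: an isolated invariant set is compatible. *)

Section Repeller.
Variables (T : finType) (opens : {set {set T}}) (V : {set {set T}}).
Hypothesis Htop : is_T0_topology opens.
Hypothesis HV : multivector_field opens V.
Implicit Types (A R N : {set T}) (x y z : T).

Local Notation cl := (cl opens).
Local Notation is_open := (is_open opens).
Local Notation is_closed := (is_closed opens).
Local Notation Pi := (Pi opens V).
Local Notation PiInv := (PiInv opens V).

Lemma subset_cl A : A \subset cl A.
Proof. by apply/subsetP=> x xA; apply/bigcapP=> C /andP[_ /subsetP]; apply. Qed.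

Lemma cl1P x y :
  reflect (forall C, is_closed C -> x \in C -> y \in C) (y \in cl [set x]).
Proof.
apply: (iffP bigcapP) => [H C cC xC | H C /andP[cC]].
  by apply: H; rewrite cC sub1set.
by rewrite sub1set; apply: H.
Qed.

Lemma open_cl1_mem R x y : is_open R -> y \in R -> y \in cl [set x] -> x \in R.
Proof.
move=> oR yR /cl1P ycl; apply: contraTT yR => xR.
rewrite -in_setC; apply: ycl; last by rewrite inE.
by rewrite /Defs.is_closed setCK.
Qed.

Definition min_nbhd y : {set T} := \bigcap_(U in opens | y \in U) U.

Lemma mem_min_nbhd y : y \in min_nbhd y.
Proof. by apply/bigcapP=> U /andP[]. Qed.

Lemma min_nbhd_cl1 y z : z \in min_nbhd y -> y \in cl [set z].
Proof.
move=> /bigcapP zU; apply/cl1P=> C cC zC; apply: contraT => yNC.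
have /zU : (~: C \in opens) && (y \in ~: C) by rewrite inE yNC andbT.
by rewrite inE zC.
Qed.

Lemma open_min_nbhd y : is_open (min_nbhd y).
Proof.
case: Htop => _ oT _ oI _.
by apply: (big_ind (fun U => U \in opens)) => // U /andP[].
Qed.

Lemma open_of_cl1_closed R :
  (forall x y, y \in R -> y \in cl [set x] -> x \in R) -> is_open R.
Proof.
move=> Rup; case: Htop => o0 _ oU _ _.
have -> : R = \bigcup_(y in R) min_nbhd y.
  apply/setP=> z; apply/idP/bigcupP => [zR | [y yR /min_nbhd_cl1]].
    by exists z => //; apply: mem_min_nbhd.
  exact: Rup.
by apply: (big_ind (fun U => U \in opens)) => // y _; apply: open_min_nbhd.
Qed.

Lemma mem_pblock_self x : x \in pblock V x.
Proof. by case: HV => /and3P[/eqP cov _ _] _; rewrite mem_pblock cov inE. Qed.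

Lemma pblock_sym x y : x \in pblock V y -> y \in pblock V x.
Proof.
by case: HV => /and3P[_ tV _] _ /(same_pblock tV) ->; apply: mem_pblock_self.
Qed.

Lemma mem_Pi_self x : x \in Pi x.
Proof. by rewrite inE (subsetP (subset_cl _)) ?orbT ?set11. Qed.

Lemma compatibleP R :
  compatible V R <-> (forall x y, x \in pblock V y -> y \in R -> x \in R).
Proof.
split=> [cR x y xy yR | Rblock x].
  case: (cR y) => [/pred0P/(_ y)|/subsetP]; last exact.
  by rewrite /= mem_pblock_self yR.
case: (boolP [disjoint pblock V x & R]) => [|/pred0Pn[z /andP[zx zR]]]; first by left.
right; apply/subsetP=> w wx; apply: (Rblock w z) zR.
case: HV => /and3P[_ tV _] _.
by rewrite -(same_pblock tV (pblock_sym zx)).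
Qed.

Lemma PiInv_fixedP R :
  PiInv R = R <-> (forall x y, y \in Pi x -> y \in R -> x \in R).
Proof.
split=> [fixR x y yx yR | Rback].
  by rewrite -fixR inE; apply/set0Pn; exists y; rewrite inE yx.
apply/setP=> x; rewrite inE; apply/set0Pn/idP => [[y /setIP[]] | xR].
  exact: Rback.
by exists x; rewrite inE mem_Pi_self.
Qed.

Lemma PiInv_fixed_open_compatible R :
  PiInv R = R <-> is_open R /\ compatible V R.
Proof.
split=> [/PiInv_fixedP Rback | [oR /compatibleP Rblock]].
  split; last by apply/compatibleP=> x y xy; apply: Rback; rewrite inE pblock_sym.
  by apply: open_of_cl1_closed => x y yR ycl; apply: (Rback x y) yR; rewrite inE ycl orbT.
apply/PiInv_fixedP=> x y /setUP[/pblock_sym/Rblock | /(open_cl1_mem oR)]; apply.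
Qed.

Lemma path_in_last_mem R x0 p :
  PiInv R = R -> path (fun x y => y \in Pi x) x0 p -> last x0 p \in R ->
  all (mem R) (x0 :: p).
Proof.
move/PiInv_fixedP=> Rback; elim: p x0 => [|y p IH] x0 /=; first by rewrite andbT.
case/andP=> yx pth /(IH y pth) /= /andP[yR ->].
by rewrite yR (Rback x0 y).
Qed.

Lemma isolates_setT R : PiInv R = R -> isolates opens V [set: T] R.
Proof.
move=> fixR; split; [|exact: subsetT| |exact: subsetT].
  by case: Htop => o0 *; rewrite /Defs.is_closed setCT.
by move=> x0 p /andP[pth _] _; apply: path_in_last_mem.
Qed.

Lemma isolates_compatible N R : isolates opens V N R -> compatible V R.
Proof.
case=> _ sRN Hpath sPiN; apply/compatibleP=> x y xy yR.
have xN : x \in N by apply/(subsetP sPiN)/bigcupP; exists y; rewrite // inE xy.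
have /Hpath : path_in opens V N y [:: x; y].
  by rewrite /path_in /= !inE xy pblock_sym // xN (subsetP sRN).
by rewrite yR => /(_ isT isT) /and3P[].
Qed.

End Repeller.

Theorem theorem6p3 (T : finType) (opens : {set {set T}}) (V : {set {set T}})
  (Htop : is_T0_topology opens) (HV : multivector_field opens V)
  (HX : is_invariant opens V [set: T]) (R : {set T}) :
  [<-> repeller opens V R;
       is_open opens R /\ compatible V R /\ is_invariant opens V R;
       is_open opens R /\ isolated_invariant opens V R].
Proof.
tfae.
- by case=> invR /(PiInv_fixed_open_compatible Htop HV)[].
- case=> oR [cR invR]; split=> //; split=> //; exists [set: T].
  by apply: isolates_setT => //; apply/PiInv_fixed_open_compatible.
- case=> oR [invR [N isoN]]; split=> //.
  apply/PiInv_fixed_open_compatible => //; split=> //.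
  exact: isolates_compatible isoN.
Qed.
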